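(* Assume $(\phi1)$, $(\phi3)$ and $(\phi4)$. Then: (i) $J_1(s,b):=\phi(\frac{s^2+b^2}{2})b^2$ is increasing and convex in $b$ on $[0,\infty)$ for every fixed $s\in\mathbb{R}$; (ii) $J_2(s,b):=\Phi(\frac{s^2+b^2}{2})-\frac1N\phi(\frac{s^2+b^2}{2})b^2$ is increasing and convex in $b$ on $[0,\infty)$ for every fixed $s\in\mathbb{R}$.
   Context: $N\ge3$. $\phi:[0,\infty)\to\mathbb{R}$, $\Phi(s)=\int_0^s\phi$. $(\phi1)$: $\phi$ continuous, $0<\phi_0\le\phi\le\phi_1$ for constants $\phi_0<\phi_1$. $(\phi3)$: $\phi\in C^1([0,\infty))$, $s|\phi'(s)|\le C$ and $\phi_0\le\phi(s)+2s\phi'(s)$ for all $s\ge0$. $(\phi4)$: $\phi\in C^2([0,\infty))$, $s^2|\phi''(s)|\le C$, and for all $s\ge0$: $3\phi'(s)+2s|\phi''(s)|\le0$ and $0\le\phi(s)+5s\phi'(s)-2s^2|\phi''(s)|$. *)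

From Stdlib Require Import Reals.
From Coquelicot Require Import Coquelicot.
Open Scope R_scope.

Definition cont_on_half (f : R -> R) : Prop :=
  (forall x, 0 < x -> continuous f x) /\
  filterlim f (at_right 0) (locally (f 0)).

Definition deriv_on_half (f df : R -> R) : Prop :=
  (forall x, 0 < x -> is_derive f x (df x)) /\
  filterlim (fun h => (f h - f 0) / h) (at_right 0) (locally (df 0)).

Definition Phi (phi : R -> R) (s : R) : R := RInt phi 0 s.

Definition incr_on_half (g : R -> R) : Prop :=
  forall x y, 0 <= x -> x < y -> g x < g y.

Definition convex_on_half (g : R -> R) : Prop :=
  forall x y t, 0 <= x -> 0 <= y -> 0 <= t <= 1 ->
    g (t * x + (1 - t) * y) <= t * g x + (1 - t) * g y.

Definition J1 (phi : R -> R) (s b : R) : R :=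
  phi ((s ^ 2 + b ^ 2) / 2) * b ^ 2.

Definition J2 (N : nat) (phi : R -> R) (s b : R) : R :=
  Phi phi ((s ^ 2 + b ^ 2) / 2) - / INR N * phi ((s ^ 2 + b ^ 2) / 2) * b ^ 2.

(* Write v = (s^2 + b^2)/2 and t = b^2, so that 0 <= t <= 2 v. By the chain
   rule, for b > 0,
     J1'  = b (2 phi + t phi'),          J1'' = 2 phi + 5 t phi' + t^2 phi'',
     N J2' = b ((N-2) phi - t phi'),     N J2'' = N (phi + t phi') - J1'',
   all evaluated at v. The hypotheses (phi1), (phi3), (phi4) at v make these
   brackets positive (nonnegative for J1''), and a function continuous on
   [0,oo) whose derivative is positive on (0,oo) is strictly increasing, one
   whose derivative is continuous and nondecreasing is convex. *)

From Stdlib Require Import Reals Lra Psatz.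
From Coquelicot Require Import Coquelicot.
Open Scope R_scope.

Lemma mvt_closed (g dg : R -> R) (a b : R) : a <= b ->
  (forall x, a < x < b -> is_derive g x (dg x)) ->
  (forall x, a <= x <= b -> continuous g x) ->
  exists c, a <= c <= b /\ g b - g a = dg c * (b - a).
Proof.
  intros Hab Hd Hc.
  destruct (MVT_gen g a b dg) as [c [Hc_in Hc_eq]];
    rewrite ?Rmin_left, ?Rmax_right in * by lra.
  - exact Hd.
  - intros x Hx; apply continuity_pt_filterlim, Hc, Hx.
  - exists c; split; assumption.
Qed.

Section Monotonicity.
Variables g dg : R -> R.
Hypothesis g_derive : forall x, 0 < x -> is_derive g x (dg x).
Hypothesis g_cont : forall x, 0 <= x -> continuous g x.

Lemma nondecreasing_of_derive : (forall x, 0 <= x -> 0 <= dg x) ->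
  forall x y, 0 <= x -> x <= y -> g x <= g y.
Proof.
  intros Hdg x y Hx Hxy.
  destruct (mvt_closed g dg x y Hxy) as [c [Hc Hgc]].
  - intros z Hz; apply g_derive; lra.
  - intros z Hz; apply g_cont; lra.
  - assert (0 <= dg c) by (apply Hdg; lra). nra.
Qed.

(* If moreover the derivative is positive on (0,oo), g is strictly increasing:
   g x <= g m by monotonicity, and g m < g y by the mean value theorem on
   [m, y] with m = (x+y)/2 > 0. *)
Lemma incr_on_half_of_derive : (forall x, 0 <= x -> 0 <= dg x) ->
  (forall x, 0 < x -> 0 < dg x) -> incr_on_half g.
Proof.
  intros Hdg Hdg_pos; unfold incr_on_half; intros x y Hx Hxy.
  set (m := (x + y) / 2).
  assert (Hxm : g x <= g m) by (apply nondecreasing_of_derive; [exact Hdg | | unfold m]; lra).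
  destruct (mvt_closed g dg m y) as [c [Hc Hgc]]; unfold m in *.
  - lra.
  - intros z Hz; apply g_derive; lra.
  - intros z Hz; apply g_cont; lra.
  - assert (0 < dg c) by (apply Hdg_pos; lra). nra.
Qed.

End Monotonicity.

Section Convexity.
Variables g dg ddg : R -> R.
Hypothesis g_derive : forall x, 0 < x -> is_derive g x (dg x).
Hypothesis g_cont : forall x, 0 <= x -> continuous g x.
Hypothesis dg_derive : forall x, 0 < x -> is_derive dg x (ddg x).
Hypothesis dg_cont : forall x, 0 <= x -> continuous dg x.
Hypothesis ddg_nonneg : forall x, 0 <= x -> 0 <= ddg x.

(* Convexity inequality for ordered points x <= y: the slopes of g on
   [x, z] and [z, y] are values dg c1 <= dg c2, since dg is nondecreasing. *)
Lemma convex_ordered_points (x y t : R) : 0 <= x -> x <= y -> 0 <= t <= 1 ->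
  g (t * x + (1 - t) * y) <= t * g x + (1 - t) * g y.
Proof.
  intros Hx Hxy Ht.
  set (z := t * x + (1 - t) * y).
  assert (Hxz : x <= z) by (unfold z; nra).
  assert (Hzy : z <= y) by (unfold z; nra).
  destruct (mvt_closed g dg x z Hxz) as [c1 [Hc1 Hslope1]];
    [intros; apply g_derive; lra | intros; apply g_cont; lra |].
  destruct (mvt_closed g dg z y Hzy) as [c2 [Hc2 Hslope2]];
    [intros; apply g_derive; lra | intros; apply g_cont; lra |].
  assert (Hdg12 : dg c1 <= dg c2).
  { apply (nondecreasing_of_derive dg ddg); auto; lra. }
  assert (Hzx : z - x = (1 - t) * (y - x)) by (unfold z; ring).
  assert (Hyz : y - z = t * (y - x)) by (unfold z; ring).
  rewrite Hzx in Hslope1; rewrite Hyz in Hslope2.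
  assert (0 <= t * (1 - t) * (y - x) * (dg c2 - dg c1)).
  { repeat apply Rmult_le_pos; lra. }
  nra.
Qed.

Lemma convex_on_half_of_derive2 : convex_on_half g.
Proof.
  intros x y t Hx Hy Ht.
  destruct (Rle_dec x y) as [Hxy | Hyx].
  - apply convex_ordered_points; assumption.
  - replace (t * x + (1 - t) * y) with ((1 - t) * y + (1 - (1 - t)) * x) by ring.
    replace (t * g x + (1 - t) * g y) with ((1 - t) * g y + (1 - (1 - t)) * g x) by ring.
    apply convex_ordered_points; lra.
Qed.
End Convexity.

Definition clamp (f : R -> R) (x : R) : R := f (Rmax 0 x).

Lemma clamp_continuous (f : R -> R) : cont_on_half f ->
  forall x, continuous (clamp f) x.
Proof.
  intros [f_cont f_cont0] x.
  destruct (Rtotal_order x 0) as [Hneg | [-> | Hpos]].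
  -
    apply (continuous_ext_loc _ (fun _ => f 0)); [| apply continuous_const].
    exists (mkposreal (- x) ltac:(lra)); intros y Hy.
    change (Rabs (y - x) < - x) in Hy; apply Rabs_def2 in Hy.
    unfold clamp; rewrite Rmax_left by lra; reflexivity.
  -
    apply filterlim_locally; intros eps.
    destruct (proj1 (filterlim_locally f (f 0)) f_cont0 eps) as [d Hd].
    exists d; intros y Hy.
    change (Rabs (y - 0) < d) in Hy; rewrite Rminus_0_r in Hy.
    unfold clamp; rewrite (Rmax_left 0 0) by lra.
    destruct (Rle_lt_dec y 0) as [Hy0 | Hy0].
    + rewrite Rmax_left by lra; apply ball_center.
    + rewrite Rmax_right by lra; apply Hd; [| exact Hy0].
      change (Rabs (y - 0) < d); rewrite Rminus_0_r, Rabs_pos_eq by lra.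
      apply Rabs_def2 in Hy; lra.
  -
    apply (continuous_ext_loc _ f); [| apply f_cont, Hpos].
    exists (mkposreal x Hpos); intros y Hy.
    change (Rabs (y - x) < x) in Hy; apply Rabs_def2 in Hy.
    unfold clamp; rewrite Rmax_right by lra; reflexivity.
Qed.

Lemma Phi_clamp (phi : R -> R) (v : R) : 0 <= v ->
  Phi phi v = RInt (clamp phi) 0 v.
Proof.
  intros Hv; unfold Phi; apply RInt_ext.
  intros x Hx; rewrite Rmin_left, Rmax_right in Hx by lra.
  unfold clamp; rewrite Rmax_right by lra; reflexivity.
Qed.

Lemma RInt_clamp_derive (phi : R -> R) : cont_on_half phi ->
  forall v, is_derive (RInt (clamp phi) 0) v (clamp phi v).
Proof.
  intros phi_cont v; apply is_derive_RInt with 0.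
  - apply filter_forall; intros w.
    apply (@RInt_correct R_CompleteNormedModule), ex_RInt_continuous.
    intros z _; apply clamp_continuous, phi_cont.
  - apply clamp_continuous, phi_cont.
Qed.

Definition half_norm2 (s b : R) : R := (s ^ 2 + b ^ 2) / 2.

Lemma half_norm2_nonneg (s b : R) : 0 <= half_norm2 s b.
Proof. unfold half_norm2; nra. Qed.

Lemma half_norm2_pos (s b : R) : 0 < b -> 0 < half_norm2 s b.
Proof. unfold half_norm2; nra. Qed.

Lemma half_norm2_derive (s b : R) : is_derive (half_norm2 s) b b.
Proof. unfold half_norm2; auto_derive; [exact I | field]. Qed.

(* f (half_norm2 s b) is continuous in b as soon as f is continuous on
   [0,oo): it coincides with clamp f (half_norm2 s b). *)
Lemma comp_half_norm2_continuous (f : R -> R) : cont_on_half f ->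
  forall s b, continuous (fun b => f (half_norm2 s b)) b.
Proof.
  intros f_cont s b.
  apply (continuous_ext (fun b => clamp f (half_norm2 s b))).
  { intros y; unfold clamp; rewrite Rmax_right by apply half_norm2_nonneg; reflexivity. }
  apply (continuous_comp (half_norm2 s) (clamp f)); [| apply clamp_continuous, f_cont].
  apply (ex_derive_continuous (half_norm2 s)); exists b; apply half_norm2_derive.
Qed.

Lemma comp_half_norm2_derive (f df : R -> R) :
  (forall v, 0 < v -> is_derive f v (df v)) ->
  forall s b, 0 < b -> is_derive (fun b => f (half_norm2 s b)) b (b * df (half_norm2 s b)).
Proof.
  intros f_derive s b Hb.
  apply (is_derive_comp f (half_norm2 s)).
  - apply f_derive, half_norm2_pos, Hb.
  - apply half_norm2_derive.
Qed.

Lemma Phi_comp_half_norm2_derive (phi : R -> R) : cont_on_half phi ->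
  forall s b, is_derive (fun b => Phi phi (half_norm2 s b)) b (b * phi (half_norm2 s b)).
Proof.
  intros phi_cont s b.
  apply (is_derive_ext (fun b => RInt (clamp phi) 0 (half_norm2 s b))).
  { intros y; symmetry; apply Phi_clamp, half_norm2_nonneg. }
  replace (phi (half_norm2 s b)) with (clamp phi (half_norm2 s b))
    by (unfold clamp; rewrite Rmax_right by apply half_norm2_nonneg; reflexivity).
  apply (is_derive_comp (RInt (clamp phi) 0) (half_norm2 s)).
  - apply RInt_clamp_derive, phi_cont.
  - apply half_norm2_derive.
Qed.

Lemma is_derive_Rmult (f g : R -> R) (x df dg : R) :
  is_derive f x df -> is_derive g x dg ->
  is_derive (fun y => f y * g y) x (df * g x + f x * dg).
Proof. intros Hf Hg; apply (is_derive_mult f g x df dg Hf Hg), Rmult_comm. Qed.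

Lemma is_derive_eq (f : R -> R) (x l l' : R) :
  is_derive f x l -> l = l' -> is_derive f x l'.
Proof. intros H <-; exact H. Qed.

Lemma is_derive_sq (x : R) : is_derive (fun y => y ^ 2) x (2 * x).
Proof. auto_derive; [exact I | ring]. Qed.

Lemma continuous_sq (x : R) : continuous (fun y => y ^ 2) x.
Proof. apply (ex_derive_continuous (fun y => y ^ 2)); eexists; apply is_derive_sq. Qed.

Section Derivatives.
Variable N : nat.
Variables phi dphi ddphi : R -> R.
Variable s : R.

Let p b := phi (half_norm2 s b).
Let q b := dphi (half_norm2 s b).
Let r b := ddphi (half_norm2 s b).

Definition dJ1 (b : R) : R := b * (2 * p b + b ^ 2 * q b).
Definition ddJ1 (b : R) : R := 2 * p b + 5 * b ^ 2 * q b + (b ^ 2) ^ 2 * r b.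
Definition dJ2 (b : R) : R := b * p b - / INR N * dJ1 b.
Definition ddJ2 (b : R) : R := p b + b ^ 2 * q b - / INR N * ddJ1 b.

Hypothesis phi_cont : cont_on_half phi.
Hypothesis phi_derive : forall v, 0 < v -> is_derive phi v (dphi v).

Lemma J1_derive (b : R) : 0 < b -> is_derive (J1 phi s) b (dJ1 b).
Proof.
  intros Hb; eapply is_derive_eq.
  - apply (is_derive_Rmult (fun b => phi (half_norm2 s b)) (fun b => b ^ 2)).
    + exact (comp_half_norm2_derive phi dphi phi_derive s b Hb).
    + apply is_derive_sq.
  - unfold dJ1, p, q; ring.
Qed.

Lemma J1_continuous (b : R) : continuous (J1 phi s) b.
Proof.
  apply (continuous_mult (fun b => phi (half_norm2 s b)) (fun b => b ^ 2)).
  - apply comp_half_norm2_continuous, phi_cont.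
  - apply continuous_sq.
Qed.

Lemma J2_derive (b : R) : 0 < b -> is_derive (J2 N phi s) b (dJ2 b).
Proof.
  intros Hb; eapply is_derive_eq.
  - apply (is_derive_minus (fun b => Phi phi (half_norm2 s b))
             (fun b => / INR N * phi (half_norm2 s b) * b ^ 2)).
    + apply Phi_comp_half_norm2_derive, phi_cont.
    + apply (is_derive_Rmult (fun b => / INR N * phi (half_norm2 s b)) (fun b => b ^ 2)).
      * apply is_derive_scal, (comp_half_norm2_derive phi dphi phi_derive s b Hb).
      * apply is_derive_sq.
  - unfold dJ2, dJ1, p, q, minus, plus, opp; simpl; ring.
Qed.

Lemma J2_continuous (b : R) : continuous (J2 N phi s) b.
Proof.
  apply (continuous_minus (fun b => Phi phi (half_norm2 s b))
           (fun b => / INR N * phi (half_norm2 s b) * b ^ 2)).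
  - apply (ex_derive_continuous (fun b => Phi phi (half_norm2 s b))).
    eexists; apply Phi_comp_half_norm2_derive, phi_cont.
  - apply (continuous_mult (fun b => / INR N * phi (half_norm2 s b)) (fun b => b ^ 2)).
    + apply (continuous_mult (fun _ => / INR N) (fun b => phi (half_norm2 s b))).
      * apply continuous_const.
      * apply comp_half_norm2_continuous, phi_cont.
    + apply continuous_sq.
Qed.

Hypothesis dphi_cont : cont_on_half dphi.
Hypothesis dphi_derive : forall v, 0 < v -> is_derive dphi v (ddphi v).

Lemma dJ1_derive (b : R) : 0 < b -> is_derive dJ1 b (ddJ1 b).
Proof.
  intros Hb; eapply is_derive_eq.
  - apply (is_derive_Rmult (fun b => b) (fun b => 2 * p b + b ^ 2 * q b)).
    + apply is_derive_id.
    + apply (is_derive_plus (fun b => 2 * p b) (fun b => b ^ 2 * q b)).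
      * apply is_derive_scal, (comp_half_norm2_derive phi dphi phi_derive s b Hb).
      * apply (is_derive_Rmult (fun b => b ^ 2) q).
        -- apply is_derive_sq.
        -- exact (comp_half_norm2_derive dphi ddphi dphi_derive s b Hb).
  - unfold ddJ1, p, q, r, one, plus; simpl; ring.
Qed.

Lemma dJ1_continuous (b : R) : continuous dJ1 b.
Proof.
  apply (continuous_mult (fun b => b) (fun b => 2 * p b + b ^ 2 * q b)).
  - apply continuous_id.
  - apply (continuous_plus (fun b => 2 * p b) (fun b => b ^ 2 * q b)).
    + apply (continuous_mult (fun _ => 2) p).
      * apply continuous_const.
      * apply comp_half_norm2_continuous, phi_cont.
    + apply (continuous_mult (fun b => b ^ 2) q).
      * apply continuous_sq.
      * apply comp_half_norm2_continuous, dphi_cont.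
Qed.

Lemma dJ2_derive (b : R) : 0 < b -> is_derive dJ2 b (ddJ2 b).
Proof.
  intros Hb; eapply is_derive_eq.
  - apply (is_derive_minus (fun b => b * p b) (fun b => / INR N * dJ1 b)).
    + apply (is_derive_Rmult (fun b => b) p).
      * apply is_derive_id.
      * exact (comp_half_norm2_derive phi dphi phi_derive s b Hb).
    + apply is_derive_scal, dJ1_derive, Hb.
  - unfold ddJ2, p, q, one, minus, plus, opp; simpl; ring.
Qed.

Lemma dJ2_continuous (b : R) : continuous dJ2 b.
Proof.
  apply (continuous_minus (fun b => b * p b) (fun b => / INR N * dJ1 b)).
  - apply (continuous_mult (fun b => b) p).
    + apply continuous_id.
    + apply comp_half_norm2_continuous, phi_cont.
  - apply (continuous_mult (fun _ => / INR N) dJ1).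
    + apply continuous_const.
    + apply dJ1_continuous.
Qed.

End Derivatives.

Section PointwiseBounds.
(* The values p = phi v, q = phi' v, r = phi'' v at a point v >= 0 satisfying
   (phi1), (phi3) and (phi4), and t = b^2 with 0 <= t <= 2 v (since
   v = (s^2 + b^2)/2). *)
Variables v t p q r : R.
Hypothesis t_range : 0 <= t <= 2 * v.
Hypothesis p_pos : 0 < p.
Hypothesis phi3_bound : 0 < p + 2 * v * q.
Hypothesis phi4_first : 3 * q + 2 * v * Rabs r <= 0.
Hypothesis phi4_second : 0 <= p + 5 * v * q - 2 * v ^ 2 * Rabs r.

Let v_nonneg : 0 <= v. Proof. lra. Qed.
Let r_bound : - Rabs r <= r. Proof. pose proof (Rle_abs (- r)); rewrite Rabs_Ropp in *; lra. Qed.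
Let Rabs_r_nonneg : 0 <= Rabs r. Proof. apply Rabs_pos. Qed.

Lemma dphi_nonpos : q <= 0.
Proof. assert (0 <= v * Rabs r) by (apply Rmult_le_pos; lra). lra. Qed.

(* Since q <= 0 and t <= 2 v, p + t q >= p + 2 v q > 0. *)
Lemma first_order_pos : 0 < p + t * q.
Proof. pose proof dphi_nonpos. nra. Qed.

(* The bracket in J1'(b) = b (2 p + t q). *)
Lemma J1_slope_pos : 0 < 2 * p + t * q.
Proof. pose proof first_order_pos. lra. Qed.

(* J1''(b) = 2 p + 5 t q + t^2 r; the worst case is t = 2 v, where the bound
   is twice the quantity of (phi4). *)
Lemma J1_curvature_nonneg : 0 <= 2 * p + 5 * t * q + t ^ 2 * r.
Proof.
  pose proof dphi_nonpos.
  assert (Hr : t ^ 2 * r >= - (t ^ 2 * Rabs r)) by nra.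
  assert (Hworst : 5 * t * q - t ^ 2 * Rabs r >= 10 * v * q - 4 * v ^ 2 * Rabs r).
  { assert (0 <= (2 * v - t) * (- 5 * q + Rabs r * (2 * v + t)))
      by (apply Rmult_le_pos; nra).
    nra. }
  lra.
Qed.

Variable n : R.
Hypothesis n_ge3 : 3 <= n.

(* The bracket in N J2'(b) = b ((N - 2) p - t q). *)
Lemma J2_slope_pos : 0 < (n - 2) * p - t * q.
Proof. pose proof dphi_nonpos. nra. Qed.

(* N J2''(b) = N (p + t q) - (2 p + 5 t q + t^2 r): with N >= 3 and
   t^2 |r| <= 2 v t |r| <= - 3 t q, this is at least p + t q > 0. *)
Lemma J2_curvature_pos :
  0 < n * (p + t * q) - (2 * p + 5 * t * q + t ^ 2 * r).
Proof.
  pose proof first_order_pos.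
  assert (Hn : n * (p + t * q) >= 3 * (p + t * q)) by nra.
  assert (Hr : t ^ 2 * r <= t ^ 2 * Rabs r) by (pose proof (Rle_abs r); nra).
  assert (Ht : t ^ 2 * Rabs r <= - 3 * t * q).
  { assert (0 <= t * ((2 * v - t) * Rabs r)) by (repeat apply Rmult_le_pos; lra).
    assert (0 <= t * (- 3 * q - 2 * v * Rabs r)) by (apply Rmult_le_pos; lra).
    nra. }
  lra.
Qed.

End PointwiseBounds.

Section Parts.
(* The hypotheses (phi1), (phi3), (phi4) as they are used: pointwise on
   [0,oo), with the lower bound phi0 > 0 only through positivity. *)
Variable N : nat.
Variables phi dphi ddphi : R -> R.
Variable s : R.
Hypothesis N_ge3 : (3 <= N)%nat.
Hypothesis phi_pos : forall v, 0 <= v -> 0 < phi v.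
Hypothesis phi3 : forall v, 0 <= v -> 0 < phi v + 2 * v * dphi v.
Hypothesis phi4_first : forall v, 0 <= v -> 3 * dphi v + 2 * v * Rabs (ddphi v) <= 0.
Hypothesis phi4_second : forall v, 0 <= v ->
  0 <= phi v + 5 * v * dphi v - 2 * v ^ 2 * Rabs (ddphi v).

Let t_range (b : R) : 0 <= b ^ 2 <= 2 * half_norm2 s b.
Proof. unfold half_norm2; nra. Qed.
Let p_pos (b : R) : 0 < phi (half_norm2 s b).
Proof. apply phi_pos, half_norm2_nonneg. Qed.
Let phi3_at (b : R) : 0 < phi (half_norm2 s b) + 2 * half_norm2 s b * dphi (half_norm2 s b).
Proof. apply phi3, half_norm2_nonneg. Qed.
Let phi4_first_at (b : R) :
  3 * dphi (half_norm2 s b) + 2 * half_norm2 s b * Rabs (ddphi (half_norm2 s b)) <= 0.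
Proof. apply phi4_first, half_norm2_nonneg. Qed.
Let phi4_second_at (b : R) :
  0 <= phi (half_norm2 s b) + 5 * half_norm2 s b * dphi (half_norm2 s b)
       - 2 * half_norm2 s b ^ 2 * Rabs (ddphi (half_norm2 s b)).
Proof. apply phi4_second, half_norm2_nonneg. Qed.

Let n_ge3 : 3 <= INR N.
Proof. apply (le_INR 3) in N_ge3; simpl in N_ge3; lra. Qed.
Let inv_n_pos : 0 < / INR N.
Proof. apply Rinv_0_lt_compat; lra. Qed.

Lemma dJ1_nonneg (b : R) : 0 <= b -> 0 <= dJ1 phi dphi s b.
Proof.
  intros Hb; apply Rmult_le_pos; [exact Hb |].
  apply Rlt_le, (J1_slope_pos (half_norm2 s b) _ _ _ (ddphi (half_norm2 s b))); auto.
Qed.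

Lemma dJ1_pos (b : R) : 0 < b -> 0 < dJ1 phi dphi s b.
Proof.
  intros Hb; apply Rmult_lt_0_compat; [exact Hb |].
  apply (J1_slope_pos (half_norm2 s b) _ _ _ (ddphi (half_norm2 s b))); auto.
Qed.

Lemma ddJ1_nonneg (b : R) : 0 <= ddJ1 phi dphi ddphi s b.
Proof. apply (J1_curvature_nonneg (half_norm2 s b)); auto. Qed.

Lemma dJ2_factor (b : R) : dJ2 N phi dphi s b =
  / INR N * (b * ((INR N - 2) * phi (half_norm2 s b) - b ^ 2 * dphi (half_norm2 s b))).
Proof. unfold dJ2, dJ1; field; lra. Qed.

Lemma dJ2_nonneg (b : R) : 0 <= b -> 0 <= dJ2 N phi dphi s b.
Proof.
  intros Hb; rewrite dJ2_factor.
  apply Rmult_le_pos; [lra |]; apply Rmult_le_pos; [exact Hb |].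
  apply Rlt_le, (J2_slope_pos (half_norm2 s b) _ _ _ (ddphi (half_norm2 s b))); auto.
Qed.

Lemma dJ2_pos (b : R) : 0 < b -> 0 < dJ2 N phi dphi s b.
Proof.
  intros Hb; rewrite dJ2_factor.
  apply Rmult_lt_0_compat; [lra |]; apply Rmult_lt_0_compat; [exact Hb |].
  apply (J2_slope_pos (half_norm2 s b) _ _ _ (ddphi (half_norm2 s b))); auto.
Qed.

Lemma ddJ2_nonneg (b : R) : 0 <= ddJ2 N phi dphi ddphi s b.
Proof.
  replace (ddJ2 N phi dphi ddphi s b) with
    (/ INR N * (INR N * (phi (half_norm2 s b) + b ^ 2 * dphi (half_norm2 s b))
                - ddJ1 phi dphi ddphi s b)) by (unfold ddJ2; field; lra).
  apply Rmult_le_pos; [lra |]; apply Rlt_le.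
  apply (J2_curvature_pos (half_norm2 s b)); auto.
Qed.

Hypothesis phi_cont : cont_on_half phi.
Hypothesis dphi_cont : cont_on_half dphi.
Hypothesis phi_derive : forall v, 0 < v -> is_derive phi v (dphi v).
Hypothesis dphi_derive : forall v, 0 < v -> is_derive dphi v (ddphi v).

Lemma J1_increasing_convex :
  incr_on_half (J1 phi s) /\ convex_on_half (J1 phi s).
Proof.
  split.
  - apply (incr_on_half_of_derive _ (dJ1 phi dphi s)); intros b Hb.
    + apply J1_derive; assumption.
    + apply J1_continuous, phi_cont.
    + apply dJ1_nonneg, Hb.
    + apply dJ1_pos, Hb.
  - apply (convex_on_half_of_derive2 _ (dJ1 phi dphi s) (ddJ1 phi dphi ddphi s));
      intros b Hb.
    + apply J1_derive; assumption.
    + apply J1_continuous, phi_cont.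
    + apply dJ1_derive; assumption.
    + apply dJ1_continuous; assumption.
    + apply ddJ1_nonneg.
Qed.

Lemma J2_increasing_convex :
  incr_on_half (J2 N phi s) /\ convex_on_half (J2 N phi s).
Proof.
  split.
  - apply (incr_on_half_of_derive _ (dJ2 N phi dphi s)); intros b Hb.
    + apply J2_derive; assumption.
    + apply J2_continuous, phi_cont.
    + apply dJ2_nonneg, Hb.
    + apply dJ2_pos, Hb.
  - apply (convex_on_half_of_derive2 _ (dJ2 N phi dphi s) (ddJ2 N phi dphi ddphi s));
      intros b Hb.
    + apply J2_derive; assumption.
    + apply J2_continuous, phi_cont.
    + apply dJ2_derive; assumption.
    + apply dJ2_continuous; assumption.
    + apply ddJ2_nonneg.
Qed.

End Parts.

Theorem lemma6p1 (N : nat) (phi dphi ddphi : R -> R) (phi0 phi1 : R) :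
  (3 <= N)%nat ->
  (* (phi1) *)
  cont_on_half phi -> 0 < phi0 -> phi0 < phi1 ->
  (forall s, 0 <= s -> phi0 <= phi s <= phi1) ->
  (* (phi3): phi in C^1([0,oo)) with derivative dphi *)
  deriv_on_half phi dphi -> cont_on_half dphi ->
  (exists C, forall s, 0 <= s -> s * Rabs (dphi s) <= C) ->
  (forall s, 0 <= s -> phi0 <= phi s + 2 * s * dphi s) ->
  (* (phi4): phi in C^2([0,oo)) with second derivative ddphi *)
  deriv_on_half dphi ddphi -> cont_on_half ddphi ->
  (exists C, forall s, 0 <= s -> s ^ 2 * Rabs (ddphi s) <= C) ->
  (forall s, 0 <= s -> 3 * dphi s + 2 * s * Rabs (ddphi s) <= 0) ->
  (forall s, 0 <= s ->
     0 <= phi s + 5 * s * dphi s - 2 * s ^ 2 * Rabs (ddphi s)) ->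
  forall s : R,
    (incr_on_half (J1 phi s) /\ convex_on_half (J1 phi s)) /\
    (incr_on_half (J2 N phi s) /\ convex_on_half (J2 N phi s)).
(* phi >= phi0 > 0 turns the lower bounds of (phi1), (phi3) into positivity. *)
Proof.
  intros N_ge3 phi_cont phi0_pos _ phi_bounds [phi_derive _] dphi_cont _ phi3
    [dphi_derive _] _ _ phi4_first phi4_second s.
  assert (phi_pos : forall v, 0 <= v -> 0 < phi v)
    by (intros v Hv; pose proof (phi_bounds v Hv); lra).
  assert (phi3_pos : forall v, 0 <= v -> 0 < phi v + 2 * v * dphi v)
    by (intros v Hv; pose proof (phi3 v Hv); lra).
  split.
  - apply (J1_increasing_convex phi dphi ddphi); assumption.
  - apply (J2_increasing_convex N phi dphi ddphi); assumption.
Qed.
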